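(* Let $\varphi:\mathcal{P}(\mathbf{N})\to[0,\infty]$ be a lower semicontinuous submeasure, and set $\|A\|_\varphi=\lim_{n}\varphi(A\setminus[1,n])$ for $A\subseteq\mathbf{N}$. Suppose $\|\mathbf{N}\|_\varphi=1$ and that $\mathcal{I}=\mathrm{Exh}(\varphi):=\{A\subseteq\mathbf{N}:\|A\|_\varphi=0\}$ is an analytic P-ideal. Then there exists a normalized capacity $\rho:\mathscr{B}(\mathrm{Ult}(\mathcal{I}))\to\mathbf{R}$ such that for every $A\subseteq\mathbf{N}$, $$\|A\|_\varphi=\int_{\mathrm{Ult}(\mathcal{I})}\mu_{\mathcal{F}}(A)\,\mathrm{d}\rho(\mathcal{F}).$$
   Context: A submeasure is $\varphi:\mathcal{P}(\mathbf{N})\to[0,\infty]$ with $\varphi(\emptyset)=0$, monotone and subadditive ($\varphi(A\cup B)\le\varphi(A)+\varphi(B)$); it is lower semicontinuous if $\varphi(A)=\lim_n\varphi(A\cap[1,n])$ for all $A$. An ideal on $\mathbf{N}$ is a family closed under subsets and finite unions, not containing $\mathbf{N}$, and containing all finite sets; it is a P-ideal if for every sequence $(A_n)$ in $\mathcal{I}$ there is $A\in\mathcal{I}$ with $A_n\setminus A$ finite for all $n$; analytic means analytic as a subset of the Cantor space $\{0,1\}^{\mathbf{N}}$. $\mathrm{Ult}(\mathcal{I})$ is the set of ultrafilters on $\mathbf{N}$ containing the dual filter $\{A:\mathbf{N}\setminus A\in\mathcal{I}\}$, with topology induced from $\beta\mathbf{N}$ (basic clopen sets $\{\mathcal{F}:A\in\mathcal{F}\}$);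 $\mathscr{B}$ denotes the Borel $\sigma$-algebra; $\mu_{\mathcal{F}}(A)=1$ if $A\in\mathcal{F}$, else $0$. A normalized capacity is a monotone set function with value $0$ at $\emptyset$ and $1$ at the whole space; the integral is the Choquet integral $\int_0^\infty\rho(f\ge t)\,\mathrm{d}t+\int_{-\infty}^0[\rho(f\ge t)-1]\,\mathrm{d}t$. *)

From HB Require Import structures.
From mathcomp Require Import all_boot all_order all_algebra.
From mathcomp Require Import all_classical all_reals all_analysis.
Set Implicit Arguments. Unset Strict Implicit. Unset Printing Implicit Defensive.
Import Order.TTheory GRing.Theory Num.Theory.
Local Open Scope classical_set_scope.
Local Open Scope ring_scope.

(* Convention: N is modelled by nat = {0,1,2,...}; the initial segment
   [1,n] of the paper is modelled by [set k | k < n] (the first n elements). *)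
Definition iseg (n : nat) : set nat := [set k | (k < n)%N].

Section Defs.
Variable R : realType.
Local Open Scope ereal_scope.

Definition submeasure (phi : set nat -> \bar R) : Prop :=
  [/\ phi set0 = 0,
      (forall A, 0 <= phi A),
      (forall A B, A `<=` B -> phi A <= phi B) &
      (forall A B, phi (A `|` B) <= phi A + phi B)].

Definition lsc_submeasure (phi : set nat -> \bar R) : Prop :=
  submeasure phi /\
  forall A, phi A = limn (fun n => phi (A `&` iseg n)).

Definition phinorm (phi : set nat -> \bar R) (A : set nat) : \bar R :=
  limn (fun n => phi (A `\` iseg n)).

Definition Exh (phi : set nat -> \bar R) : set (set nat) :=
  [set A | phinorm phi A = 0].
End Defs.

Definition is_ideal (I : set (set nat)) : Prop :=
  [/\ (forall A B, B `<=` A -> I A -> I B),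
      (forall A B, I A -> I B -> I (A `|` B)),
      ~ I setT &
      (forall A, finite_set A -> I A)].

Definition is_P_ideal (I : set (set nat)) : Prop :=
  is_ideal I /\
  forall An : nat -> set nat, (forall n, I (An n)) ->
    exists A, I A /\ forall n, finite_set (An n `\` A).

Definition baire_space : Type := prod_topology (fun _ : nat => discrete_topology nat).

Definition analytic_set (T : topologicalType) (S : set T) : Prop :=
  S = set0 \/ exists f : baire_space -> T, continuous f /\ range f = S.

(* P(N) is identified with the Cantor space {0,1}^N via x <-> [set n | x n] *)
Definition analytic_family (I : set (set nat)) : Prop :=
  analytic_set [set x : cantor_space | I [set n | x n]].

Definition ultrafilter_on_nat (U : set (set nat)) : Prop :=
  [/\ ~ U set0,
      U setT,
      (forall A B, A `<=` B -> U A -> U B),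
      (forall A B, U A -> U B -> U (A `&` B)) &
      (forall A, U A \/ U (~` A))].

Definition Ult (I : set (set nat)) : set (set (set nat)) :=
  [set U | ultrafilter_on_nat U /\ forall A, I (~` A) -> U A].

(* topology on Ult(I) induced from beta N: basic clopen sets {U | A \in U} *)
Definition basic_clopen (I : set (set nat)) (A : set nat) : set (set (set nat)) :=
  [set U | Ult I U /\ U A].

Definition Ult_open (I : set (set nat)) (O : set (set (set nat))) : Prop :=
  O `<=` Ult I /\
  forall U, O U -> exists A, U A /\ basic_clopen I A `<=` O.

Definition Ult_Borel (I : set (set nat)) : set (set (set (set nat))) :=
  <<s Ult I, Ult_open I >>.

Section Capacity.
Variable R : realType.
Local Open Scope ereal_scope.

Definition normalized_capacity (I : set (set nat))
    (rho : set (set (set nat)) -> R) : Prop :=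
  [/\ rho set0 = 0%R,
      rho (Ult I) = 1%R &
      (forall B C, Ult_Borel I B -> Ult_Borel I C -> B `<=` C ->
         (rho B <= rho C)%R)].

Definition choquet_integral (I : set (set nat))
    (rho : set (set (set nat)) -> R) (f : set (set nat) -> R) : \bar R :=
  (\int[@lebesgue_measure R]_(t in `[0%R, +oo[%classic)
      (rho [set U | Ult I U /\ (t <= f U)%R])%:E) +
  (\int[@lebesgue_measure R]_(t in `]-oo, 0%R[%classic)
      (rho [set U | Ult I U /\ (t <= f U)%R] - 1)%:E).

Definition mu_ult (U : set (set nat)) (A : set nat) : R :=
  if `[< U A >] then 1%R else 0%R.
End Capacity.

From HB Require Import structures.
From mathcomp Require Import all_boot all_order all_algebra.
From mathcomp Require Import all_classical all_reals all_analysis.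
From mathcomp Require Import measurable_realfun.
Set Implicit Arguments. Unset Strict Implicit.
Import Order.TTheory GRing.Theory Num.Theory.
Local Open Scope classical_set_scope.
Local Open Scope ereal_scope.

(* Since Exh(phi) is an ideal and ||.|| is monotone, subadditive and vanishes
   on Exh(phi), ||A|| only depends on the clopen set A^ = {U : A \in U} of
   Ult(Exh(phi)), monotonically: A^ <= B^ forces A \ B in Exh(phi), hence
   ||A|| <= ||B|| + ||A \ B|| = ||B||.  The inner capacity
   rho(B) = sup {||A|| : A^ <= B} is then a normalized capacity with
   rho(A^) = ||A||, and the Choquet integral of the indicator of A^ is rho(A^). *)

Section Phinorm.
Variables (R : realType) (phi : set nat -> \bar R).
Hypothesis phi_sub : submeasure phi.

Lemma nonincreasing_phi_setD_iseg A :
  nonincreasing_seq (fun n => phi (A `\` iseg n)).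
Proof.
case: phi_sub => _ _ phi_mono _; apply/nonincreasing_seqP => n.
apply: phi_mono => x [Ax Snx]; split => // xn; apply: Snx.
by rewrite /iseg /= in xn *; apply: ltn_trans xn _.
Qed.

Lemma is_cvgn_phi_setD_iseg A : cvgn (fun n => phi (A `\` iseg n)).
Proof. exact/ereal_nonincreasing_is_cvgn/nonincreasing_phi_setD_iseg. Qed.

Lemma phinorm_ge0 A : 0 <= phinorm phi A.
Proof.
case: phi_sub => _ phi_ge0 _ _.
by apply: lime_ge; [exact: is_cvgn_phi_setD_iseg | exact: nearW].
Qed.

Lemma le_phinorm A B : A `<=` B -> phinorm phi A <= phinorm phi B.
Proof.
case: phi_sub => _ _ phi_mono _ AB.
apply: lee_lim; [exact: is_cvgn_phi_setD_iseg | exact: is_cvgn_phi_setD_iseg |].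
by apply: nearW => n; apply: phi_mono => x [Ax Snx]; split => //; apply: AB.
Qed.

Lemma phinormU_le A B : phinorm phi (A `|` B) <= phinorm phi A + phinorm phi B.
Proof.
case: phi_sub => _ _ _ phiU.
have defD : phinorm phi A +? phinorm phi B.
  by apply: ge0_adde_def; rewrite inE; apply: phinorm_ge0.
rewrite /phinorm -limeD //; try exact: is_cvgn_phi_setD_iseg.
apply: lee_lim; [exact: is_cvgn_phi_setD_iseg | | ].
  by apply: is_cvgeD => //; exact: is_cvgn_phi_setD_iseg.
by apply: nearW => n /=; rewrite setDUl.
Qed.

Lemma Exh_setD_le_phinorm A B :
  Exh phi (A `\` B) -> phinorm phi A <= phinorm phi B.
Proof.
move=> ExhAB; have AB : A `<=` B `|` (A `\` B).
  by move=> x Ax; have [Bx|nBx] := pselect (B x); [left | right].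
by rewrite -[leRHS]adde0 -ExhAB (le_trans (le_phinorm AB)) ?phinormU_le.
Qed.
End Phinorm.

Section UltIdeal.
Variable I : set (set nat).
Hypothesis I_ideal : is_ideal I.

Lemma exists_Ult_notin_ideal D : ~ I D -> exists U, Ult I U /\ U D.
Proof.
case: I_ideal => Idown IU _ Ifin ND.
pose F := [set X : set nat | exists2 B, I B & D `&` ~` B `<=` X].
have F_proper : ProperFilter F.
  split.
    move=> [B IB DB0]; apply/ND/(Idown B) => // x Dx.
    by apply: contrapT => nBx; exact: DB0 x (conj Dx nBx).
  split.
  - by exists set0; [exact: Ifin |].
  - move=> X Y [B1 IB1 sX] [B2 IB2 sY]; exists (B1 `|` B2); first exact: IU.
    by move=> x [Dx nB]; split; [apply: sX | apply: sY]; split => // Bx;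
      apply: nB; [left | right].
  - by move=> X Y XY [B IB sX]; exists B => //; apply: subset_trans XY.
have [U [U_ultra FU]] := ultraFilterLemma F_proper.
exists U; split; last by apply: FU; exists set0; [exact: Ifin | move=> x []].
split.
  split; [exact: filter_not_empty | exact: filterT | | | ].
  - by move=> A B AB; apply: filterS.
  - by move=> A B; apply: filterI.
  - by move=> A; apply: in_ultra_setVsetC.
by move=> A IA; apply: FU; exists (~` A) => // x [_]; apply: contrapT.
Qed.

Lemma basic_clopen_subset_setD_ideal A B :
  basic_clopen I A `<=` basic_clopen I B -> I (A `\` B).
Proof.
move=> AB; apply: contrapT => /exists_Ult_notin_ideal[U [UU UAB]].
have [[U0 _ Umono UI _] _] := UU.
have UA : U A by apply: Umono UAB => x [].
have [_ UB] := AB U (conj UU UA).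
by apply: U0; rewrite -(setICr B); apply: UI => //; apply: Umono UAB => x [].
Qed.
End UltIdeal.

Lemma basic_clopen0 I : basic_clopen I set0 = set0.
Proof. by apply/seteqP; split => U // [[[]]]. Qed.

Lemma basic_clopenT I : basic_clopen I setT = Ult I.
Proof.
by apply/seteqP; split => U; [case | move=> UU; split => //; case: UU => -[]].
Qed.

Lemma basic_clopen_subset I A : basic_clopen I A `<=` Ult I.
Proof. by move=> U []. Qed.

Lemma Ult_Borel_basic_clopen I A : Ult_Borel I (basic_clopen I A).
Proof.
apply: (@sub_sigma_algebra _ (Ult I) (Ult_open I)).
split; first exact: basic_clopen_subset.
by move=> U [_ UA]; exists A; split.
Qed.

Section InnerCapacity.
Variables (R : realType) (I : set (set nat)) (f : set nat -> R).
Hypothesis le_f : forall A B,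
  basic_clopen I A `<=` basic_clopen I B -> (f A <= f B)%R.

Let inner_values (B : set (set (set nat))) : set R :=
  [set f A | A in [set A | basic_clopen I A `<=` B]].

Definition inner_capacity (B : set (set (set nat))) : R := sup (inner_values B).

Let inner_values_neq0 B : inner_values B !=set0.
Proof. by exists (f set0), set0; rewrite //= basic_clopen0. Qed.

Let inner_values_ubound B : has_ubound (inner_values B).
Proof.
exists (f setT) => _ [A _ <-]; apply: le_f.
by rewrite basic_clopenT; exact: basic_clopen_subset.
Qed.

Lemma inner_capacity_basic_clopen A : inner_capacity (basic_clopen I A) = f A.
Proof.
apply/le_anti/andP; split; last by apply: ub_le_sup => //; exists A.
by apply: ge_sup => // _ [B BA <-]; apply: le_f.
Qed.

Lemma le_inner_capacity B C :
  B `<=` C -> (inner_capacity B <= inner_capacity C)%R.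
Proof.
move=> BC; apply: ge_sup => // _ [A AB <-].
by apply: ub_le_sup => //; exists A => //; apply: subset_trans BC.
Qed.

Lemma normalized_inner_capacity :
  f set0 = 0%R -> f setT = 1%R -> normalized_capacity I inner_capacity.
Proof.
move=> f0 fT; split.
- by rewrite -(basic_clopen0 I) inner_capacity_basic_clopen.
- by rewrite -basic_clopenT inner_capacity_basic_clopen.
- by move=> B C _ _; apply: le_inner_capacity.
Qed.
End InnerCapacity.

Section ChoquetDirac.
Variables (R : realType) (I : set (set nat)) (A : set nat).
Let level (t : R) := [set U | Ult I U /\ (t <= @mu_ult R U A)%R].

Let level_le0 t : (t <= 0)%R -> level t = Ult I.
Proof.
move=> t0; apply/seteqP; split => [U [] // | U UU]; split => //.
by rewrite /mu_ult; case: ifP => _ //; exact: le_trans t0 ler01.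
Qed.

Let level_itv t : (0 < t <= 1)%R -> level t = basic_clopen I A.
Proof.
move=> /andP[t0 t1]; apply/seteqP; split => U [UU UA]; split => //.
- move: UA; rewrite /mu_ult; case: ifP => [/asboolP // | _ t_le0].
  by move: (lt_le_trans t0 t_le0); rewrite ltxx.
- by rewrite /mu_ult; case: ifP => // /asboolP.
Qed.

Let level_gt1 t : (1 < t)%R -> level t = set0.
Proof.
move=> t1; apply/seteqP; split => U // [_]; rewrite /mu_ult.
have t0 := lt_trans ltr01 t1.
by case: ifP => _ => [/(lt_le_trans t1) | /(lt_le_trans t0)]; rewrite ltxx.
Qed.

Lemma choquet_integral_mu_ult rho : normalized_capacity I rho ->
  choquet_integral I rho (fun U => @mu_ult R U A) = (rho (basic_clopen I A))%:E.
Proof.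
move=> [rho0 rhoT rho_mono]; set c := rho (basic_clopen I A).
have c_ge0 : (0 <= c)%R.
  rewrite -rho0 -(basic_clopen0 I).
  apply: rho_mono; [exact: Ult_Borel_basic_clopen.. |].
  by rewrite basic_clopen0; exact: sub0set.
have levelE t : (0 < t)%R -> rho (level t) = (c * \1_(`]0%R, 1%R]) t)%R.
  move=> t0; rewrite /indic; have [t1|t1] := leP t 1%R.
    by rewrite level_itv ?t0 ?t1 // mem_set ?mulr1 //= in_itv /= t0 t1.
  by rewrite level_gt1 // rho0 memNset ?mulr0 //= in_itv /= t0 leNgt t1.
rewrite /choquet_integral [X in _ + X]integral0_eq ?adde0; last first.
  move=> t; rewrite /= in_itv /= => t0.
  by rewrite -/(level t) level_le0 ?rhoT ?subrr // ltW.
rewrite -integral_itv_obnd_cbnd; last first.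
  have mf : measurable_fun (T:=R) (U:=\bar R) `]0%R, +oo[
      (fun t => (c * \1_(`]0%R, 1%R]) t)%:E).
    exact/measurable_EFinP/measurable_funM.
  apply: eq_measurable_fun mf => t.
  by rewrite inE /= in_itv /= andbT => t0; rewrite -/(level t) levelE.
under eq_integral => t.
  rewrite inE /= in_itv /= andbT => t0; rewrite -/(level t) levelE //.
  over.
rewrite (@integralZl_indic _ _ _ (@lebesgue_measure R) _ _
    (fun=> `]0%R, 1%R] : set R)) //=; last first.
  by move=> /(le_lt_trans c_ge0); rewrite ltxx.
rewrite integral_indic // setIidl; last first.
  by move=> t; rewrite /= !in_itv /= => /andP[->].
have := lebesgue_measure_itv (Interval (BRight 0%R) (BRight (1%R : R))).
by rewrite /= lte01 oppr0 adde0 => ->; rewrite mule1.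
Qed.
End ChoquetDirac.

Theorem corollary1p3 (R : realType) (phi : set nat -> \bar R) :
  lsc_submeasure phi ->
  phinorm phi setT = 1 ->
  is_P_ideal (Exh phi) ->
  analytic_family (Exh phi) ->
  exists rho : set (set (set nat)) -> R,
    normalized_capacity (Exh phi) rho /\
    forall A : set nat,
      phinorm phi A =
      choquet_integral (Exh phi) rho (fun U => @mu_ult R U A).
Proof.
move=> [phi_sub _] phinormT [Exh_ideal _] _.
pose norm A := fine (phinorm phi A).
have phinormE A : phinorm phi A = (norm A)%:E.
  rewrite /norm fineK // ge0_fin_numE ?phinorm_ge0 //.
  by rewrite (le_lt_trans (le_phinorm phi_sub (@subsetT _ A))) // phinormT ltey.
have le_norm A B : basic_clopen (Exh phi) A `<=` basic_clopen (Exh phi) B ->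
    (norm A <= norm B)%R.
  move=> /(basic_clopen_subset_setD_ideal Exh_ideal) ExhAB.
  by rewrite -lee_fin -!phinormE; exact: Exh_setD_le_phinorm.
have norm0 : norm set0 = 0%R.
  by rewrite /norm; case: Exh_ideal => _ _ _ -> //; exact: finite_set0.
have normT : norm setT = 1%R by rewrite /norm phinormT.
exists (inner_capacity (Exh phi) norm).
have rho_capacity := normalized_inner_capacity le_norm norm0 normT.
split => // A.
by rewrite choquet_integral_mu_ult // inner_capacity_basic_clopen // phinormE.
Qed.
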